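(* Let $d$, $n$, $r$ be positive integers with $\gcd(d,n)=1$ and $n$ odd. Then, modulo $(1-aq^{r+d\langle-r/d\rangle_n})(a-q^{d-r+d\langle (r-d)/d\rangle_n})$, $$ \sum_{k=0}^{n-1}\frac{2\,(aq^r;q^d)_k\,(q^{d-r}/a;q^d)_k\, q^{dk}}{(q^d;q^d)_{k}^2\,(1+q^{dk})} \equiv (-1)^{\langle-r/d\rangle_n}. $$
   Context: $a,q$ are indeterminates. The $q$-shifted factorial is $(y;q)_0=1$ and $(y;q)_m=(1-y)(1-yq)\cdots(1-yq^{m-1})$ for $m\geqslant1$. $\langle y\rangle_m$ denotes the least non-negative residue modulo $m$ of a rational number $y$ whose denominator is coprime to $m$. For rational functions $A,B$ and a polynomial $P$, $A\equiv B\pmod P$ means $A-B=P\cdot C/D$ for polynomials $C,D$ with $D$ coprime to $P$. *)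

From HB Require Import structures.
From mathcomp Require Import all_boot all_order all_algebra.
Set Implicit Arguments. Unset Strict Implicit. Unset Printing Implicit Defensive.
Import Order.TTheory GRing.Theory Num.Theory.
Local Open Scope ring_scope.

(* Polynomial ring Q[a,q], represented as ({poly rat})[a]: the outer
   variable is a, the inner variable (coefficients) is q. *)
Definition Rpoly : Type := {poly {poly rat}}.
Definition Ffrac : fieldType := {fraction Rpoly}.

Notation tof := (@FracField.tofrac Rpoly).
Notation "x %:F" := (tof x).

Definition aR : Rpoly := 'X.
Definition qR : Rpoly := ('X : {poly rat})%:P.
Definition aF : Ffrac := aR%:F.
Definition qF : Ffrac := qR%:F.

Definition qpoch (y q : Ffrac) (m : nat) : Ffrac :=
  \prod_(i < m) (1 - y * q ^+ i).

(* <y>_m : least nonnegative x < m with x = y mod m, i.e. m | denq y * x - numq y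
   (returns m if no such x; it exists when the denominator is coprime to m) *)
Definition resid (y : rat) (m : nat) : nat :=
  find (fun x : nat => (m%:Z %| (denq y * x%:Z - numq y))%Z) (iota 0 m).

Definition pdvd (E P : Rpoly) : Prop := exists G : Rpoly, P = E * G.
Definition pcoprime (P D : Rpoly) : Prop :=
  forall E : Rpoly, pdvd E P -> pdvd E D -> E \is a GRing.unit.

Definition congr_mod (A B : Ffrac) (P : Rpoly) : Prop :=
  exists C D : Rpoly, D != 0 /\ pcoprime P D /\ A - B = P%:F * C%:F / D%:F.

(* The factor (a - q^z) for an integer z, as a polynomial: if z < 0 it is
   normalised by the unit q^(-z) of Q[a,q,q^-1] to a*q^(-z) - 1. *)
Definition a_minus_qpow (z : int) : Rpoly :=
  match z with
  | Posz k => aR - qR ^+ k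
  | Negz k => aR * qR ^+ k.+1 - 1
  end.

(* Put x = a q^r and Q = q^d. Each summand is a weight depending on q only
   times (x;Q)_k (Q/x;Q)_k, a polynomial in z = x + Q/x, so LHS - RHS = S(z)
   for a polynomial S whose coefficients have denominators in Q[q]. At
   x = Q^-j with j < n the sum terminates and equals (-1)^j (sum_qpoch_sign).
   The residues s = <-r/d>_n and t = <(r-d)/d>_n satisfy s + t = n - 1, which
   is even, so S vanishes at z_s and z_t, where z_j = Q^-j + Q^(j+1) (zeta j
   below). Factoring S = g (z - z_s) (z - z_t) and using
   z - z_j = -(1 - x Q^j) (x - Q^(j+1)) / (Q^j x) exhibits 1 - x Q^s and
   x - Q^(t+1) as factors, with a cofactor whose denominators v(q) a^m are
   coprime to the modulus. *)

From HB Require Import structures.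
From mathcomp Require Import all_boot all_order all_algebra.
From mathcomp Require Import ring zify boolp.
Set Implicit Arguments.
Unset Strict Implicit.
Unset Printing Implicit Defensive.

Import Order.TTheory GRing.Theory Num.Theory.
Local Open Scope ring_scope.

(** * A terminating q-series identity *)

(* ring and field do not terminate in reasonable time on the concrete field
   Ffrac, so every rational identity below is proved over an abstract field. *)

Lemma telescope_step_identity (K : fieldType) (a b P u v w : K) :
  P != 0 -> v != 0 -> w != 0 ->
  a * (1 - w^-1 * u) * (b * (1 - w * u)) * (v / (P * v)) ^+ 2 - a * b * ((1 - u) / P) ^+ 2
  = (1 - w) * (1 - w^-1) * (a * b * u / P ^+ 2).
Proof. by move=> P0 v0 w0; field; rewrite P0 v0 w0. Qed.

Lemma shifted_terms_identity (K : fieldType) (a a' b b' u w P : K) :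
  w != 0 -> 1 - w != 0 -> 1 - w^-1 != 0 -> P != 0 -> 1 + u != 0 ->
  (1 - w^-1) * a' = a * (1 - w^-1 * u) -> (1 - w) * b' = b * (1 - w * u) ->
  2 * a * b' * u / (P ^+ 2 * (1 + u)) + 2 * a' * b * u / (P ^+ 2 * (1 + u))
  = 2 * (a * b * u / P ^+ 2).
Proof.
move=> w0 w1 wV1 P0 u1 ea eb.
rewrite -[a'](mulKf wV1) -[b'](mulKf w1) ea eb.
have w1' : w - 1 != 0 by rewrite -opprB oppr_eq0.
by field; rewrite P0 u1 w1 w0 w1'.
Qed.

Local Notation F := Ffrac.

Lemma qpoch0 (y p : F) : qpoch y p 0 = 1.
Proof. by rewrite /qpoch big_ord0. Qed.

Lemma qpochSr (y p : F) k : qpoch y p k.+1 = qpoch y p k * (1 - y * p ^+ k).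
Proof. by rewrite /qpoch big_ord_recr. Qed.

Lemma qpochSl (y p : F) k : qpoch y p k.+1 = (1 - y) * qpoch (y * p) p k.
Proof.
rewrite /qpoch big_ord_recl expr0 mulr1; congr (_ * _).
by apply: eq_bigr => i _; rewrite exprS mulrA.
Qed.

Lemma qpoch_eq0 (y p : F) s k : y * p ^+ s = 1 -> (s < k)%N -> qpoch y p k = 0.
Proof.
move=> ys1 ltsk; apply/eqP/prodf_eq0; exists (Ordinal ltsk) => //=.
by rewrite ys1 subrr.
Qed.

Lemma two_neq0 : (2 : F) != 0.
Proof.
rewrite -(rmorph_nat tof) tofrac_eq0.
by rewrite -(rmorph_nat polyC) polyC_eq0 -(rmorph_nat polyC) polyC_eq0.
Qed.

Section NonRootOfUnity.

Variable p : F.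
Hypothesis p_neq0 : p != 0.
Hypothesis p_pow_neq1 : forall m, (0 < m)%N -> p ^+ m != 1.

Lemma one_sub_pow_neq0 m : (0 < m)%N -> 1 - p ^+ m != 0.
Proof. by move=> m_gt0; rewrite subr_eq0 eq_sym p_pow_neq1. Qed.

Lemma one_sub_powV_neq0 m : (0 < m)%N -> 1 - p ^- m != 0.
Proof.
move=> m_gt0; apply: contraNneq (p_pow_neq1 m_gt0) => /eqP.
by rewrite subr_eq0 => /eqP pVm; rewrite -[p ^+ m]invrK -pVm invr1.
Qed.

Lemma qpoch_self_neq0 k : qpoch p p k != 0.
Proof. by apply/prodf_neq0 => i _; rewrite -exprS one_sub_pow_neq0. Qed.

Lemma one_add_pow_neq0 k : 1 + p ^+ k != 0.
Proof.
case: k => [|k]; first by rewrite expr0 two_neq0.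
have := @p_pow_neq1 (k.+1 * 2) (muln_gt0 _ _); rewrite exprM addrC addr_eq0.
by apply: contraNneq => ->; rewrite sqrrN expr1n.
Qed.

Lemma sum_qpoch_inv_eq0 s N : (0 < s)%N -> (s < N)%N ->
  \sum_(k < N) qpoch (p ^- s) p k * qpoch (p ^+ s) p k * p ^+ k / qpoch p p k ^+ 2 = 0.
Proof.
move=> s_gt0 ltsN; set w := p ^+ s.
have w_neq0 : w != 0 by rewrite expf_neq0.
(* G vanishes at 0 and at N (as (w^-1;p)_N = 0) and telescopes the sum. *)
pose G k := qpoch w^-1 p k * qpoch w p k * ((1 - p ^+ k) / qpoch p p k) ^+ 2.
have G_step k : G k.+1 - G k =
    (1 - w) * (1 - w^-1) * (qpoch w^-1 p k * qpoch w p k * p ^+ k / qpoch p p k ^+ 2).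
  rewrite /G !qpochSr [p ^+ k.+1]exprS.
  by apply: telescope_step_identity; rewrite ?qpoch_self_neq0 -?exprS ?one_sub_pow_neq0.
apply: (mulfI (mulf_neq0 (one_sub_pow_neq0 s_gt0) (one_sub_powV_neq0 s_gt0))).
have telescope : \sum_(k < N) (G k.+1 - G k) = G N - G 0.
  by rewrite -(telescope_sumr _ (leq0n N)) big_mkord.
rewrite mulr0 mulr_sumr.
under eq_bigr do rewrite -G_step.
rewrite telescope /G (qpoch_eq0 (mulVf w_neq0) ltsN).
by rewrite expr0 subrr !mul0r expr0n mulr0 subrr.
Qed.

Lemma sum_qpoch_sign s N : (s < N)%N ->
  \sum_(k < N) 2 * qpoch (p ^- s) p k * qpoch (p ^+ s.+1) p k * p ^+ k
      / (qpoch p p k ^+ 2 * (1 + p ^+ k)) = (-1) ^+ s.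
Proof.
elim: s => [|s IHs] ltsN.
  case: N ltsN => [//|N _]; rewrite big_ord_recl big1 => [|k _].
    by rewrite expr0 invr1 !qpoch0 !expr0 expr1n !mulr1 mul1r addr0; apply: mulfV two_neq0.
  by rewrite expr0 invr1 (@qpoch_eq0 1 p 0 _ (mulr1 _)) // mulr0 !mul0r.
set w := p ^+ s.+1.
have w_neq0 : w != 0 by rewrite expf_neq0.
have pVs : p ^- s = w^-1 * p by rewrite /w exprSr invfM mulfVK.
have pSSs : p ^+ s.+2 = w * p by rewrite exprSr.
(* Consecutive sums add up to twice the vanishing sum of sum_qpoch_inv_eq0. *)
suff sum_add : \sum_(k < N) 2 * qpoch w^-1 p k * qpoch (w * p) p k * p ^+ k
      / (qpoch p p k ^+ 2 * (1 + p ^+ k)) +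
    \sum_(k < N) 2 * qpoch (w^-1 * p) p k * qpoch w p k * p ^+ k
      / (qpoch p p k ^+ 2 * (1 + p ^+ k)) = 0.
  have := IHs (ltnW ltsN); rewrite -/w pVs => IH.
  by rewrite pSSs exprS mulN1r -IH; apply/eqP; rewrite -addr_eq0 sum_add.
transitivity (2 * \sum_(k < N) qpoch w^-1 p k * qpoch w p k * p ^+ k / qpoch p p k ^+ 2).
  rewrite -big_split mulr_sumr; apply: eq_bigr => k _ /=.
  have s_gt0 := ltn0Sn s.
  apply: (shifted_terms_identity w_neq0 (one_sub_pow_neq0 s_gt0) (one_sub_powV_neq0 s_gt0)
    (qpoch_self_neq0 k) (one_add_pow_neq0 k)); by rewrite -qpochSl qpochSr.
by rewrite sum_qpoch_inv_eq0 ?mulr0.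
Qed.

Lemma exp_inj : injective (fun k => p ^+ k).
Proof.
suff le_inj m k : (m <= k)%N -> p ^+ m = p ^+ k -> m = k.
  by move=> m k; case: (leqP m k) => [/le_inj//|/ltnW/le_inj h /esym/h].
move=> lemk; rewrite -(subnKC lemk) exprD -{1}[p ^+ m]mulr1 => /(mulfI (expf_neq0 m p_neq0)).
case: (k - m)%N => [|j]; first by rewrite addn0.
by move=> /esym/eqP; rewrite (negbTE (p_pow_neq1 (ltn0Sn j))).
Qed.

End NonRootOfUnity.

(** * Least non-negative residues *)

Section Residue.

Variables (d n : nat) (N : int) (y : rat).
Hypothesis coprime_dn : coprime d n.
Hypothesis yd : y * d%:Q = - N%:~R.

Lemma resid_dvdE x :
  (n%:Z %| denq y * x%:Z - numq y)%Z = (n%:Z %| d%:Z * x%:Z + N)%Z.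
Proof.
set D := denq y; set M := numq y.
have MD : M * d%:Z = - N * D.
  apply: (@intr_inj rat); rewrite !rmorphM /= numqE -/D mulrAC.
  by rewrite -pmulrn yd rmorphN.
have D_dvd_d : (D %| d%:Z)%Z.
  have : (D %| M * d%:Z)%Z by rewrite MD dvdz_mull.
  by rewrite Gauss_dvdzr // coprimezE coprime_sym coprime_num_den.
have coprime_nd : coprimez n d by rewrite coprimezE /= coprime_sym.
have coprime_nD : coprimez n D.
  by rewrite coprimez_sym coprimezE /=; apply: coprime_dvdl coprime_dn.
have scale : d%:Z * (D * x%:Z - M) = D * (d%:Z * x%:Z + N).
  by rewrite mulrBr mulrCA (mulrC _ M) MD; ring.
by rewrite -(Gauss_dvdzr _ coprime_nd) scale Gauss_dvdzr.
Qed.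

Lemma resid_eq x : (x < n)%N -> (n%:Z %| d%:Z * x%:Z + N)%Z -> resid y n = x.
Proof.
move=> ltxn dvd_x.
have sol_uniq x' : (x' < n)%N -> (n%:Z %| d%:Z * x'%:Z + N)%Z -> x' = x.
  move=> ltx'n dvd_x'.
  have : (n%:Z %| d%:Z * (x'%:Z - x%:Z))%Z.
    have -> : d%:Z * (x'%:Z - x%:Z) = (d%:Z * x'%:Z + N) - (d%:Z * x%:Z + N) by ring.
    exact: rpredB.
  rewrite Gauss_dvdzr ?coprimezE /= 1?coprime_sym // -eqz_mod_dvd !modz_nat.
  by rewrite !modn_small // => /eqP [].
rewrite /resid; set P := (fun x0 : nat => _).
have has_x : has P (iota 0 n) by apply/hasP; exists x; rewrite ?mem_iota /P ?resid_dvdE.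
have lt_find : (find P (iota 0 n) < n)%N.
  by rewrite -[n in (_ < n)%N](size_iota 0 n) -has_find.
apply: (sol_uniq _ lt_find).
by have := nth_find 0 has_x; rewrite /P nth_iota ?add0n ?resid_dvdE.
Qed.

End Residue.

Lemma resid_complement (d n r : nat) : (0 < d)%N -> (0 < n)%N -> coprime d n ->
  (resid (- r%:Q / d%:Q) n < n)%N /\
  resid ((r%:Q - d%:Q) / d%:Q) n = (n.-1 - resid (- r%:Q / d%:Q) n)%N.
Proof.
move=> d_gt0 n_gt0 coprime_dn.
have d_neq0 : d%:Q != 0 by rewrite pnatr_eq0 -lt0n.
have [u _] := Bezoutl d n_gt0; rewrite gcdnC (eqP coprime_dn) => nu.
set s := ((u * r) %% n)%N.
have lt_sn : (s < n)%N by rewrite ltn_mod.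
have dvd_s : (n %| d * s + r)%N.
  rewrite /dvdn -modnDml modnMmr modnDml.
  have -> : (d * (u * r) + r = (1 + u * d) * r)%N by ring.
  by rewrite -modnMml (eqP nu) mul0n mod0n.
have -> : resid (- r%:Q / d%:Q) n = s.
  by apply: (resid_eq (d := d) (N := r%:Z)); rewrite ?divfK ?dvdzE.
split => //; apply: (resid_eq (d := d) (N := d%:Z - r%:Z)) => //.
- by rewrite divfK // rmorphB /= opprB.
- lia.
have -> : d%:Z * (n.-1 - s)%N%:Z + (d%:Z - r%:Z) = n%:Z * d%:Z - (d * s + r)%N%:Z.
  have -> : (n.-1 - s)%N%:Z = n%:Z - 1 - s%:Z by lia.
  by rewrite PoszD PoszM; ring.
by rewrite rpredB ?dvdz_mulr // dvdzE.
Qed.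

(** * Fractions whose denominators are coprime to the modulus *)

Lemma size_dvd_CXn (R : idomainType) (E G : {poly R}) (c : R) m :
  c != 0 -> E.[0] != 0 -> E * G = c%:P * 'X^m -> size E = 1%N.
Proof.
move=> c_neq0 E0_neq0; elim: m G => [|m IHm] G EG.
  have E_neq0 : E != 0 by apply: contraNneq E0_neq0 => ->; rewrite horner0.
  have G_neq0 : G != 0 by apply: contra_eq_neq EG => ->; rewrite mulr0 mulr1 eq_sym polyC_eq0.
  have := congr1 (fun p : {poly R} => size p) EG.
  rewrite /= expr0 mulr1 size_polyC c_neq0 size_mul //.
  by have := size_poly_gt0 E; have := size_poly_gt0 G; rewrite E_neq0 G_neq0 /=; lia.
have : root G 0.
  have := congr1 (horner^~ 0) EG; rewrite /= hornerM exprSr mulrA hornerMX mulr0.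
  by move/eqP; rewrite mulf_eq0 (negbTE E0_neq0).
case/factor_theorem => G' G_eq; apply: (IHm G'); move: EG; rewrite G_eq subr0 => EGX.
by apply: (@mulIf _ 'X); rewrite ?polyX_eq0 //; rewrite -mulrA EGX exprSr mulrA.
Qed.

Lemma a_minus_qpow_at0_monomial z : exists j, (a_minus_qpow z).[0] = - 'X^j.
Proof. by case: z => k; [exists k | exists 0%N]; rewrite /= /qR !hornerE. Qed.

Lemma a_minus_qpow_at2_at0_neq0 z : ((a_minus_qpow z).[2]).[0] != 0.
Proof. by case: z => [[|k]|k]; rewrite /= /qR !hornerE ?expr0n. Qed.

Lemma pcoprime_modulus (u : nat) (z : int) (v : {poly rat}) m : (0 < u)%N -> v != 0 ->
  pcoprime ((1 - aR * qR ^+ u) * a_minus_qpow z) (v%:P * aR ^+ m).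
Proof.
(* A common divisor E is a constant e of Q[q], as P at a = 0 is the monomial
   -q^j. Then e divides q^j and e(0) != 0 (P at a = 2, q = 0 is nonzero), so
   e is a nonzero rational. *)
move=> u_gt0 v_neq0 E [G1 EG1] [G2 EG2].
set P := _ * _ in EG1.
have [j P0] : exists j, P.[0] = - 'X^j.
  have [j zj] := a_minus_qpow_at0_monomial z; exists j.
  by rewrite /P hornerM hornerD hornerN hornerM hornerX mul0r subr0 hornerC mul1r zj.
have E0_neq0 : E.[0] != 0.
  have : E.[0] * G1.[0] != 0 by rewrite -hornerM -EG1 P0 oppr_eq0 expf_neq0 ?polyX_eq0.
  by apply: contraNneq => ->; rewrite mul0r.
have E_const : E = (E`_0)%:P.
  by apply: size1_polyC; rewrite (size_dvd_CXn v_neq0 E0_neq0 (esym EG2)).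
set e := E`_0 in E_const.
have e0_neq0 : e.[0] != 0.
  have : (P.[2]).[0] != 0.
    have first_at2 : (1 - aR * qR ^+ u).[2] = 1 - 2 * 'X^u by rewrite /qR !hornerE.
    rewrite /P hornerM first_at2 hornerM !hornerE expr0n (gtn_eqF u_gt0) mulr0 subr0 mul1r.
    exact: a_minus_qpow_at2_at0_neq0.
  rewrite EG1 hornerM E_const hornerC hornerM.
  by apply: contraNneq => ->; rewrite mul0r.
have size_e : size e = 1%N.
  apply: (size_dvd_CXn (oner_neq0 _) e0_neq0 (G := - G1.[0])).
  by rewrite mul1r mulrN -[e](hornerC _ 0) -E_const -hornerM -EG1 P0 opprK.
rewrite E_const; apply: rmorph_unit; rewrite poly_unitE size_e eqxx unitfE /=.
have -> : e`_0 = lead_coef e by rewrite lead_coefE size_e.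
by rewrite lead_coef_eq0 -size_poly_eq0 size_e.
Qed.

Definition qpoly : {pred F} := fun f => `[< exists v : {poly rat}, f = (v%:P)%:F >].

(* The fractions C / (v(q) a^m) with v != 0: a subring of Ffrac whose
   elements can serve as cofactors in congr_mod (see congr_mod_qa_frac). *)
Definition qa_frac : {pred F} :=
  fun f => `[< exists C (v : {poly rat}) m, v != 0 /\ f = C%:F / (v%:P * aR ^+ m)%:F >].

Fact qpoly_subring_closed : subring_closed qpoly.
Proof.
split=> [|_ _ /asboolP[v ->] /asboolP[w ->]|_ _ /asboolP[v ->] /asboolP[w ->]]; apply/asboolP.
- by exists 1; rewrite polyC1 tofrac1.
- by exists (v - w); rewrite polyCB tofracB.
- by exists (v * w); rewrite polyCM tofracM.
Qed.

HB.instance Definition _ := GRing.isSubringClosed.Build F qpoly qpoly_subring_closed.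

Lemma denom_neq0 (v : {poly rat}) m : v != 0 -> v%:P * aR ^+ m != 0.
Proof. by move=> v_neq0; rewrite mulf_neq0 ?polyC_eq0 ?expf_neq0 ?polyX_eq0. Qed.

Fact qa_frac_subring_closed : subring_closed qa_frac.
Proof.
split=> [|_ _ /asboolP[C [v [m [v0 ->]]]] /asboolP[C' [v' [m' [v0' ->]]]]
        |_ _ /asboolP[C [v [m [v0 ->]]]] /asboolP[C' [v' [m' [v0' ->]]]]];
  apply/asboolP.
- by exists 1, 1, 0%N; rewrite oner_neq0 polyC1 mulr1 tofrac1 divr1.
- exists (C * (v'%:P * aR ^+ m') - C' * (v%:P * aR ^+ m)), (v * v'), (m + m')%N.
  split; first exact: mulf_neq0.
  have D_neq0 : v%:P * aR ^+ m != 0 := denom_neq0 m v0.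
  have D'_neq0 : v'%:P * aR ^+ m' != 0 := denom_neq0 m' v0'.
  rewrite -mulNr addf_div ?tofrac_eq0 // polyCM exprD mulrACA tofracB !tofracM.
  by rewrite mulNr.
- exists (C * C'), (v * v'), (m + m')%N; split; first exact: mulf_neq0.
  by rewrite mulf_div -!tofracM polyCM exprD mulrACA.
Qed.

HB.instance Definition _ := GRing.isSubringClosed.Build F qa_frac qa_frac_subring_closed.

Lemma qpoly_qa_frac : {subset qpoly <= qa_frac}.
Proof.
move=> _ /asboolP[v ->]; apply/asboolP; exists v%:P, 1, 0%N.
by rewrite oner_neq0 polyC1 mul1r tofrac1 divr1.
Qed.

Lemma qpoly_q : qF \in qpoly.
Proof. by apply/asboolP; exists 'X. Qed.

Lemma qa_frac_a : aF \in qa_frac.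
Proof.
apply/asboolP; exists aR, 1, 0%N.
by rewrite oner_neq0 polyC1 mul1r tofrac1 divr1.
Qed.

Lemma qa_frac_aV : aF^-1 \in qa_frac.
Proof.
apply/asboolP; exists 1, 1, 1%N.
by rewrite oner_neq0 polyC1 mul1r expr1 tofrac1 div1r.
Qed.

Lemma qa_frac_qpolyV f : f \in qpoly -> f^-1 \in qa_frac.
Proof.
move=> /asboolP[v ->]; have [->|v_neq0] := eqVneq v 0.
  by rewrite polyC0 tofrac0 invr0 rpred0.
by apply/asboolP; exists 1, v, 0%N; rewrite expr0 mulr1 tofrac1 div1r.
Qed.

Lemma qF_neq0 : qF != 0.
Proof. by rewrite tofrac_eq0 polyC_eq0 polyX_eq0. Qed.

Lemma aF_neq0 : aF != 0.
Proof. by rewrite tofrac_eq0 polyX_eq0. Qed.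

Lemma qF_pow_neq1 m : (0 < m)%N -> qF ^+ m != 1.
Proof.
move=> m_gt0; have -> : qF ^+ m = (('X ^+ m : {poly rat})%:P)%:F by rewrite !rmorphXn.
rewrite -tofrac1 tofrac_eq -polyC1 (inj_eq polyC_inj).
apply: contraTneq m_gt0 => /(congr1 (fun p : {poly rat} => size p)).
by rewrite size_polyXn size_poly1 => -[->].
Qed.

Lemma a_minus_qpowE (u v : nat) :
  aF * qF ^+ u - qF ^+ v = (a_minus_qpow (v%:Z - u%:Z))%:F * qF ^+ minn u v.
Proof.
have [le_uv|lt_vu] := leqP u v.
  rewrite subzn // /= tofracB tofracXn mulrBl -exprD subnK //.
have -> : v%:Z - u%:Z = Negz (u - v).-1 by rewrite NegzE; lia.
rewrite /= tofracB tofracM !tofracXn tofrac1 mulrBl mul1r.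
by rewrite -mulrA -exprD prednK ?subn_gt0 // subnK // ltnW.
Qed.

Lemma congr_mod_qa_frac (A B f : F) (u : nat) (z : int) : (0 < u)%N -> f \in qa_frac ->
  A - B = ((1 - aR * qR ^+ u) * a_minus_qpow z)%:F * f ->
  congr_mod A B ((1 - aR * qR ^+ u) * a_minus_qpow z).
Proof.
move=> u_gt0 /asboolP[C [v [m [v_neq0 ->]]]] AB.
exists C, (v%:P * aR ^+ m); split; first exact: denom_neq0.
by split; [exact: pcoprime_modulus | rewrite AB mulrA].
Qed.

(** * The sum as a polynomial in x + Q/x *)

Lemma polyOver_factor_theorem (R : comNzRingType) (S : subringClosed R) (p : {poly R}) c :
  p \is a polyOver S -> c \in S -> root p c ->
  exists2 g, g \is a polyOver S & p = g * ('X - c%:P).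
Proof.
move=> Sp Sc /eqP pc0.
have euclid q : q \is a polyOver S ->
    exists2 g, g \is a polyOver S & q = g * ('X - c%:P) + (q.[c])%:P.
  elim/poly_ind: q => [|q k IHq] Sqk.
    by exists 0; rewrite ?rpred0 // mul0r horner0 add0r.
  have Sq : q \is a polyOver S.
    by apply/polyOverP => i; have /polyOverP/(_ i.+1) := Sqk; rewrite coefD coefMX coefC addr0.
  have Sk : k \in S.
    by have /polyOverP/(_ 0%N) := Sqk; rewrite coefD coefMX coefC add0r.
  have [g Sg qg] := IHq Sq; exists (g * 'X + (q.[c])%:P).
    by rewrite rpredD ?rpredM ?polyOverX ?polyOverC ?rpred_horner.
  rewrite hornerMXaddC {1}qg polyCD polyCM; ring.
have [g Sg pg] := euclid p Sp; exists g => //.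
by rewrite {1}pg pc0 addr0.
Qed.

Section SumPolynomial.

Variable Q : F.
Hypothesis Q_qpoly : Q \in qpoly.
Hypothesis Q_neq0 : Q != 0.
Hypothesis Q_pow_neq1 : forall m, (0 < m)%N -> Q ^+ m != 1.

Definition theta k : {poly F} := \prod_(i < k) ((1 + Q ^+ (2 * i + 1))%:P - Q ^+ i *: 'X).

Lemma theta_eval k x : x != 0 -> (theta k).[x + Q / x] = qpoch x Q k * qpoch (Q / x) Q k.
Proof.
move=> x_neq0; rewrite /theta horner_prod /qpoch -big_split; apply: eq_bigr => i _ /=.
rewrite hornerD hornerN hornerC hornerZ hornerX addn1 exprSr mul2n -addnn exprD.
have factor (K : fieldType) (c y z : K) : y != 0 ->
    1 + c * c * z - c * (y + z / y) = (1 - y * c) * (1 - z / y * c).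
  by move=> y_neq0; field.
exact: factor.
Qed.

Lemma theta_polyOver k : theta k \is a polyOver qa_frac.
Proof.
apply: rpred_prod => i _; have Q_qa := qpoly_qa_frac Q_qpoly.
by rewrite rpredB ?polyOverC ?polyOverZ ?polyOverX ?rpredD ?rpred1 ?rpredX.
Qed.

Definition weight k : F := 2 * Q ^+ k / (qpoch Q Q k ^+ 2 * (1 + Q ^+ k)).

Lemma weight_qa_frac k : weight k \in qa_frac.
Proof.
have qpoch_qpoly : qpoch Q Q k \in qpoly.
  by apply: rpred_prod => i _; rewrite rpredB ?rpred1 ?rpredM ?rpredX.
apply: rpredM; [apply: qpoly_qa_frac | apply: qa_frac_qpolyV].
  by apply: rpredM; [exact: rpred_nat | exact: rpredX].
by apply: rpredM; [exact: rpredX | apply: rpredD; [exact: rpred1 | exact: rpredX]].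
Qed.

Definition sum_poly n c : {poly F} := \sum_(k < n) weight k *: theta k - c%:P.

Lemma sum_poly_eval n c x : x != 0 ->
  (sum_poly n c).[x + Q / x] = \sum_(k < n) weight k * (qpoch x Q k * qpoch (Q / x) Q k) - c.
Proof.
move=> x_neq0; rewrite /sum_poly hornerD hornerN hornerC horner_sum.
by congr (_ - _); apply: eq_bigr => k _; rewrite hornerZ theta_eval.
Qed.

Lemma sum_poly_polyOver n c : c \in qa_frac -> sum_poly n c \is a polyOver qa_frac.
Proof.
move=> c_qa; rewrite rpredB ?polyOverC // rpred_sum // => k _.
by rewrite polyOverZ ?weight_qa_frac ?theta_polyOver.
Qed.

Lemma weight_mulE k a b :
  weight k * (a * b) = 2 * a * b * Q ^+ k / (qpoch Q Q k ^+ 2 * (1 + Q ^+ k)).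
Proof.
have reorder (K : comNzRingType) (c u a' b' D : K) : c * u * D * (a' * b') = c * a' * b' * u * D.
  by ring.
exact: reorder.
Qed.

Definition zeta j : F := Q ^- j + Q / Q ^- j.

Lemma zeta_qa_frac j : zeta j \in qa_frac.
Proof.
have Q_qa := qpoly_qa_frac Q_qpoly.
rewrite /zeta invrK.
exact: rpredD (qa_frac_qpolyV (rpredX j Q_qpoly)) (rpredM Q_qa (rpredX _ Q_qa)).
Qed.

Lemma sub_zeta y j : y != 0 ->
  y + Q / y - zeta j = (1 - y * Q ^+ j) * (y - Q ^+ j.+1) * - (Q ^+ j * y)^-1.
Proof.
have identity (K : fieldType) (z u v : K) : v != 0 -> u != 0 ->
    (v + z / v) - (u^-1 + z / u^-1) = (1 - v * u) * (v - z * u) * - (u * v)^-1.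
  by move=> v_neq0 u_neq0; field; rewrite v_neq0 u_neq0 oner_neq0.
by move=> y_neq0; rewrite /zeta exprS; apply: identity y_neq0 (expf_neq0 j Q_neq0).
Qed.

Lemma zeta_sub_neq0 s t : s != t -> zeta t - zeta s != 0.
Proof.
move=> neq_st; have Qk_neq0 k : Q ^+ k != 0 := expf_neq0 k Q_neq0.
have QtV_neq0 : Q ^- t != 0 by rewrite invr_eq0; apply: Qk_neq0.
rewrite {1}/zeta (sub_zeta _ QtV_neq0); apply: mulf_neq0; first apply: mulf_neq0.
- rewrite subr_eq0 eq_sym; apply: contra_neq neq_st => QtVs.
  apply: (exp_inj Q_neq0 Q_pow_neq1) => /=.
  by rewrite -[LHS](mulVKf (Qk_neq0 t)) QtVs mulr1.
- rewrite subr_eq0; apply: contraNneq (Q_pow_neq1 (ltn0Sn (t + s))) => QtVs.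
  by apply/eqP; rewrite -addnS exprD -QtVs (mulfV (Qk_neq0 t)).
- by rewrite oppr_eq0 invr_eq0; apply: mulf_neq0 (Qk_neq0 s) QtV_neq0.
Qed.

Lemma sum_poly_root n s : (s < n)%N -> root (sum_poly n ((-1) ^+ s)) (zeta s).
Proof.
move=> ltsn; rewrite /root sum_poly_eval ?invr_eq0 ?expf_neq0 // subr_eq0.
rewrite invrK -exprS -(sum_qpoch_sign Q_neq0 Q_pow_neq1 ltsn).
by apply/eqP/eq_bigr => k _; rewrite weight_mulE.
Qed.

Lemma sum_poly_eval_factor n s t x :
  (s < n)%N -> (t < n)%N -> (-1) ^+ s = (-1) ^+ t :> F ->
  x != 0 -> x \in qa_frac -> x^-1 \in qa_frac ->
  exists2 f, f \in qa_frac &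
    (sum_poly n ((-1) ^+ s)).[x + Q / x] = (1 - x * Q ^+ s) * (x - Q ^+ t.+1) * f.
Proof.
move=> ltsn lttn sign_st x_neq0 x_qa xV_qa.
have Q_qa := qpoly_qa_frac Q_qpoly.
have c_qa k : - (Q ^+ k * x)^-1 \in qa_frac.
  by rewrite rpredN invfM; apply: rpredM (qa_frac_qpolyV (rpredX k Q_qpoly)) xV_qa.
have z_qa : x + Q / x \in qa_frac by apply: rpredD x_qa (rpredM Q_qa xV_qa).
set S := sum_poly n _.
have S_over : S \is a polyOver qa_frac.
  by apply: sum_poly_polyOver; apply: rpredX; rewrite rpredN; apply: rpred1.
have [g g_over S_g] := polyOver_factor_theorem S_over (zeta_qa_frac s) (sum_poly_root ltsn).
have [<-|neq_st] := eqVneq s t.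
  exists (- (Q ^+ s * x)^-1 * g.[x + Q / x]).
    exact: rpredM (c_qa s) (rpred_horner g_over z_qa).
  by rewrite S_g hornerM hornerXsubC (sub_zeta _ x_neq0) [LHS]mulrC !mulrA.
have zt_root : root g (zeta t).
  have := sum_poly_root lttn; rewrite -sign_st -/S /root S_g hornerM hornerXsubC.
  by rewrite mulf_eq0 (negbTE (zeta_sub_neq0 neq_st)) orbF.
have [g' g'_over g_g'] := polyOver_factor_theorem g_over (zeta_qa_frac t) zt_root.
exists (g'.[x + Q / x] * (1 - x * Q ^+ t) * - (Q ^+ t * x)^-1
          * (x - Q ^+ s.+1) * - (Q ^+ s * x)^-1).
  apply: rpredM (c_qa s); apply: rpredM; last by apply: rpredB x_qa (rpredX _ Q_qa).
  apply: rpredM (c_qa t); apply: rpredM (rpred_horner g'_over z_qa) _.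
  exact: rpredB (rpred1 _) (rpredM x_qa (rpredX _ Q_qa)).
rewrite S_g hornerM hornerXsubC g_g' hornerM hornerXsubC.
rewrite (sub_zeta s x_neq0) (sub_zeta t x_neq0).
have reorder (K : comNzRingType) (h a1 b1 c1 a2 b2 c2 : K) :
    h * (a1 * b1 * c1) * (a2 * b2 * c2) = a2 * b1 * (h * a1 * c1 * b2 * c2).
  by ring.
exact: reorder.
Qed.

End SumPolynomial.

(** * Specialisation to Q = q^d and x = a q^r *)

Lemma sign_complement (R : pzRingType) n s : odd n -> (s < n)%N ->
  (-1) ^+ s = (-1) ^+ (n.-1 - s) :> R.
Proof.
move=> odd_n lt_sn; have n_gt0 : (0 < n)%N := leq_ltn_trans (leq0n s) lt_sn.
have le_s : (s <= n.-1)%N by rewrite -ltnS (prednK n_gt0).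
have even_sum : ~~ odd (s + (n.-1 - s)).
  by move: odd_n; rewrite (subnKC le_s) -{1}(prednK n_gt0).
rewrite -signr_odd -[RHS]signr_odd; congr (_ ^+ _).
by move: even_sum; rewrite oddD; case: (odd s); case: (odd _).
Qed.

Lemma qF_pow_not_root d : (0 < d)%N -> forall m, (0 < m)%N -> (qF ^+ d) ^+ m != 1.
Proof. by move=> d_gt0 m m_gt0; rewrite -exprM qF_pow_neq1 // muln_gt0 d_gt0. Qed.

Lemma aq_neq0 r : aF * qF ^+ r != 0.
Proof. exact: mulf_neq0 aF_neq0 (expf_neq0 r qF_neq0). Qed.

Lemma qa_frac_aq r : aF * qF ^+ r \in qa_frac.
Proof. exact: rpredM qa_frac_a (rpredX r (qpoly_qa_frac qpoly_q)). Qed.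

Lemma qa_frac_aqV r : (aF * qF ^+ r)^-1 \in qa_frac.
Proof. by rewrite invfM; apply: rpredM qa_frac_aV (qa_frac_qpolyV (rpredX r qpoly_q)). Qed.

Lemma sum_as_sum_poly (d n r : nat) c :
  \sum_(k < n)
     (2 * qpoch (aF * qF ^+ r) (qF ^+ d) k
        * qpoch (qF ^ (d%:Z - r%:Z) / aF) (qF ^+ d) k * qF ^+ (d * k))
     / ((qpoch (qF ^+ d) (qF ^+ d) k) ^+ 2 * (1 + qF ^+ (d * k)))
  = (sum_poly (qF ^+ d) n c).[aF * qF ^+ r + qF ^+ d / (aF * qF ^+ r)] + c.
Proof.
have -> : qF ^ (d%:Z - r%:Z) / aF = qF ^+ d / (aF * qF ^+ r).
  by rewrite expfzDr ?qF_neq0 // -exprnN invfM mulrA mulrAC.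
rewrite (sum_poly_eval (qF ^+ d) n c (aq_neq0 r)) subrK.
by apply: eq_bigr => k _; rewrite weight_mulE exprM.
Qed.

Lemma modulus_factorization (d r s t : nat) :
  (1 - aF * qF ^+ r * (qF ^+ d) ^+ s) * (aF * qF ^+ r - (qF ^+ d) ^+ t.+1)
  = ((1 - aR * qR ^+ (r + d * s)) * a_minus_qpow (d%:Z - r%:Z + (d * t)%:Z))%:F
    * qF ^+ minn r (d * t.+1).
Proof.
have -> : d%:Z - r%:Z + (d * t)%:Z = (d * t.+1)%:Z - r%:Z by rewrite mulnS PoszD addrAC.
rewrite tofracM -[RHS]mulrA -a_minus_qpowE tofracB tofrac1 tofracM !tofracXn.
by rewrite exprD -mulrA -!exprM.
Qed.

Theorem corollary1p4 (d n r : nat) :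
  (0 < d)%N -> (0 < n)%N -> (0 < r)%N -> coprime d n -> odd n ->
  congr_mod
    (\sum_(k < n)
       (2 * qpoch (aF * qF ^+ r) (qF ^+ d) k
          * qpoch (qF ^ (d%:Z - r%:Z) / aF) (qF ^+ d) k * qF ^+ (d * k))
       / ((qpoch (qF ^+ d) (qF ^+ d) k) ^+ 2 * (1 + qF ^+ (d * k))))
    ((-1) ^+ resid (- (r%:Q) / d%:Q) n)
    ((1 - aR * qR ^+ (r + d * resid (- (r%:Q) / d%:Q) n))
       * a_minus_qpow (d%:Z - r%:Z + (d * resid ((r%:Q - d%:Q) / d%:Q) n)%:Z)).
Proof.
move=> d_gt0 n_gt0 r_gt0 coprime_dn odd_n.
have [lt_sn ->] := resid_complement r d_gt0 n_gt0 coprime_dn.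
set s := resid _ n; set t := (n.-1 - s)%N.
have lt_tn : (t < n)%N by rewrite /t; lia.
have [f f_qa sum_f] := sum_poly_eval_factor (rpredX d qpoly_q) (expf_neq0 d qF_neq0)
  (qF_pow_not_root d_gt0) lt_sn lt_tn (sign_complement F odd_n lt_sn)
  (aq_neq0 r) (qa_frac_aq r) (qa_frac_aqV r).
apply: (congr_mod_qa_frac (f := qF ^+ minn r (d * t.+1) * f)).
- by rewrite addn_gt0 r_gt0.
- exact: rpredM (qpoly_qa_frac (rpredX _ qpoly_q)) f_qa.
- by rewrite (sum_as_sum_poly d n r ((-1) ^+ s)) addrK sum_f modulus_factorization mulrA.
Qed.
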